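(* Let $\mathscr C$ be a class of graphs with sub-exponential expansion. Then for every integer $p\ge 2$ there exists an integer $g_p$ such that every graph $G\in\mathscr C$ with $\mathrm{girth}(G)\ge g_p$ is $p$-path degenerate.
   Context: Graphs are finite and simple; the girth of a graph is the length of a shortest cycle ($+\infty$ for a forest). A strict ear of a graph $G$ is a path of $G$ whose internal vertices all have degree $2$ in $G$ and whose two endpoints are distinct. For an integer $p\ge1$, a $p$-reduction of $G$ is the deletion of either an isolated vertex, or a vertex of degree $1$, or the internal vertices of a strict ear of $G$ of length at least $p$. A graph is $p$-path degenerate if it can be reduced to the empty graph (no vertices) by a sequence of $p$-reductions. For a half-integer $r\ge0$ ($r\in\frac12\mathbb N$), a graph $H$ is a shallow minor of $G$ at depth $r$ if to every $v\in V(H)$ one can associate a rooted tree $(T_v,r_v)$ such that the $T_v$ are vertex-disjoint subgraphs of $G$, each $T_v$ has radius at most $\lceil r\rceil$ (every path of $T_v$ starting at $r_v$ has length at most $\lceil r\rceil$), and for every edge $uv\in E(H)$ there is an edge $e$ of $G$ between $T_u$ and $T_v$ such that the path between $r_u$ and $r_v$ in $T_u\cup T_v\cup\{e\}$ has length at most $2r+1$. $\nabla_r(G)$ is the maximum of $|E(H)|/|V(H)|$ over nonempty shallow minors $H$ of $G$ at depth $r$. The expansion of a class $\mathscr C$ is $\mathrm{Exp}_{\mathscr C}(r)=\sup\{\nabla_r(G):G\in\mathscr C\}$ for $r\in\frac12\mathbb N$. The class has sub-exponential expansion if $\mathrm{Exp}_{\mathscr C}(r)=2^{o(r)}$ (in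 particular it is finite for every $r$). *)

From mathcomp Require Import all_boot.
Set Implicit Arguments. Unset Strict Implicit. Unset Printing Implicit Defensive.

Record sgraph := SGraph {
  svert : finType;
  sadj : rel svert;
  sadj_sym : symmetric sadj;
  sadj_irr : irreflexive sadj }.

Definition graph_class := sgraph -> Prop.

Definition nedges (G : sgraph) : nat :=
  #|[set e : {set svert G} |
      [exists x, exists y, sadj x y && (e == [set x; y])]]|.

Definition nverts (G : sgraph) : nat := #|svert G|.

Definition is_cycle (G : sgraph) (x0 : svert G) (t : seq (svert G)) : bool :=
  [&& uniq (x0 :: t), 3 <= size (x0 :: t), path (@sadj G) x0 t
    & sadj (last x0 t) x0].

Definition girth_ge (G : sgraph) (g : nat) : Prop :=
  forall (x0 : svert G) (t : seq (svert G)), is_cycle x0 t -> g <= size (x0 :: t).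

(** ** p-path degeneracy.
    We work with the induced subgraph G[V] for V : {set svert G}. *)
Definition deg_in (G : sgraph) (V : {set svert G}) (x : svert G) : nat :=
  #|[set y in V | sadj x y]|.

Definition interior (T : Type) (x0 : T) (t : seq T) : seq T :=
  take (size t).-1 t.

Definition strict_ear (G : sgraph) (V : {set svert G}) (x0 : svert G)
  (t : seq (svert G)) : bool :=
  [&& uniq (x0 :: t), t != [::], all (fun x => x \in V) (x0 :: t),
      path (@sadj G) x0 t
    & all (fun x => deg_in V x == 2) (interior x0 t)].

Inductive p_reduction (p : nat) (G : sgraph) (V : {set svert G}) :
  {set svert G} -> Prop :=
| red_isolated x : x \in V -> deg_in V x = 0 -> p_reduction p V (V :\ x)
| red_leaf x : x \in V -> deg_in V x = 1 -> p_reduction p V (V :\ x)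
| red_ear x0 t : strict_ear V x0 t -> p <= size t ->
    p_reduction p V (V :\: [set x | x \in interior x0 t]).

Inductive p_reducible (p : nat) (G : sgraph) : {set svert G} -> Prop :=
| pred_empty : p_reducible p (set0 : {set svert G})
| pred_step V W : p_reduction p V W -> p_reducible p W -> p_reducible p V.

Definition p_path_degenerate (p : nat) (G : sgraph) : Prop :=
  p_reducible p [set: svert G].

(** The depth r is a half-integer, encoded by k = 2r : nat; thus
    ceil r = (k+1)./2 and 2r+1 = k+1.
    The rooted trees (T_u, rt u) are encoded by their vertex sets S u, their
    roots rt u and a (global) parent map par: every non-root x of S u has its
    parent par x in S u, adjacent to x in G (tree edges are {x, par x}), and
    iterating par from x reaches the root; the length of the tree path from
    the root to x is the least n with iter n par x = rt u. *)
Definition shallow_minor (k : nat) (G H : sgraph) : Prop :=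
  exists (S : svert H -> {set svert G}) (rt : svert H -> svert G)
         (par : svert G -> svert G),
  [/\ (forall u v, u != v -> [disjoint S u & S v]),
      (forall u, rt u \in S u),
      (forall u x, x \in S u -> x != rt u -> (par x \in S u) && sadj x (par x)),
      (forall u x, x \in S u -> exists2 n, n <= (k.+1)./2 & iter n par x = rt u)
    & (forall u v, sadj u v -> exists x y n m,
         [/\ [&& x \in S u, y \in S v & sadj x y],
             iter n par x = rt u, iter m par y = rt v & n + m + 1 <= k.+1])].

(** Exp_C(k/2) <= b, i.e. |E(H)|/|V(H)| <= b for every nonempty shallow
    minor H at depth k/2 of a graph of C. *)
Definition expansion_le (C : graph_class) (k b : nat) : Prop :=
  forall G H, C G -> shallow_minor k G H -> 0 < nverts H ->
    nedges H <= b * nverts H.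

(** Sub-exponential expansion: Exp_C(r) is finite for all r, and
    Exp_C(r) = 2^{o(r)}, i.e. for every eps = 1/q > 0 there is R such that
    Exp_C(r) <= 2^{r/q} for all r >= R (r = k/2); the inequality
    |E(H)|/|V(H)| <= 2^{k/(2q)} is written |E(H)|^{2q} <= 2^k |V(H)|^{2q}. *)
Definition subexp_expansion (C : graph_class) : Prop :=
  (forall k, exists b, expansion_le C k b) /\
  (forall q, 0 < q -> exists K, forall k, K <= k ->
     forall G H : sgraph, C G -> shallow_minor k G H -> 0 < nverts H ->
       nedges H ^ (2 * q) <= 2 ^ k * nverts H ^ (2 * q)).

(* If [G] is not p-path degenerate, repeated p-reductions leave a nonempty
   induced subgraph [G[V]] of minimum degree 2 all of whose strict ears are
   shorter than [p]. Fix [R] with [girth G > 8R + 2]. Balls of radius [R] are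
   then trees in which a branch vertex (degree at least 3) occurs within every
   [p] steps, so each contains about [2 ^ (R / p)] branch vertices. Take a
   maximal family of vertices with disjoint [R]-balls; BFS trees of depth [2R]
   around them partition [V], and contracting them gives a shallow minor at
   depth [2R]. Large girth makes distinct non-tree edges map to distinct edges
   of the minor, and counting degrees gives the minor average degree at least
   [2 ^ (R / p)], exponential in the depth, against sub-exponential
   expansion. *)

From mathcomp Require Import all_boot zify.
From Stdlib Require Import Classical_Prop.
Set Implicit Arguments. Unset Strict Implicit. Unset Printing Implicit Defensive.

Lemma adj_neq (G : sgraph) (u v : svert G) : sadj u v -> u != v.
Proof. by apply: contraTneq => ->; rewrite sadj_irr. Qed.

Lemma interior_rcons (T : Type) (a b : T) s : interior a (rcons s b) = s.
Proof. by rewrite /interior size_rcons -cats1 take_size_cat. Qed.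

Lemma last_rev_belast (T : Type) (a : T) w : last (last a w) (rev (belast a w)) = a.
Proof. by case: w => [|c w] //=; rewrite rev_cons last_rcons. Qed.

Lemma card_dep_pairs (T : finType) (A : {set T}) (f : T -> {set T}) :
  #|[set q : T * T | (q.1 \in A) && (q.2 \in f q.1)]| = \sum_(x in A) #|f x|.
Proof.
rewrite -sum1_card (eq_bigl (fun q : T * T => (q.1 \in A) && (q.2 \in f q.1))).
  rewrite -(pair_big_dep (mem A) (fun x y => y \in f x) (fun _ _ => 1)).
  by apply: eq_bigr => x _; rewrite sum1_card.
by move=> q; rewrite inE.
Qed.

Lemma card_arcs_le (H : sgraph) :
  #|[set q : svert H * svert H | sadj q.1 q.2]| <= 2 * nedges H.
Proof.
(* An arc is determined by its edge and by whether it increases [enum_rank]. *)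
pose f (q : svert H * svert H) := ([set q.1; q.2], enum_rank q.1 < enum_rank q.2).
have f_inj : {in [set q : svert H * svert H | sadj q.1 q.2] &, injective f}.
  move=> [a b] [a' b']; rewrite !inE /= => ab _ [E1 E2].
  have nab := adj_neq ab.
  have : a \in [set a'; b'] by rewrite -E1 set21.
  have : b \in [set a'; b'] by rewrite -E1 set22.
  rewrite !inE => /orP[/eqP eb|/eqP eb] /orP[/eqP ea|/eqP ea]; subst => //.
  - by rewrite eqxx in nab.
  - move: E2; case: ltngtP => // /val_inj/enum_rank_inj ab'.
    by rewrite ab' eqxx in nab.
  - by rewrite eqxx in nab.
rewrite -(card_in_imset f_inj) -[2]card_bool -cardsT mulnC -cardsX.
apply: subset_leq_card; apply/subsetP => _ /imsetP[[a b] ab ->].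
rewrite !inE andbT; apply/existsP; exists a; apply/existsP; exists b.
by rewrite eqxx andbT; rewrite inE in ab.
Qed.

Section Walks.
Variable G : sgraph.
Local Notation T := (svert G).
Local Notation adj := (@sadj G).

Definition adj_avoiding (a b : T) : rel T := fun u v =>
  adj u v && ~~ ((u == a) && (v == b) || (u == b) && (v == a)).

(* Closing the walk with the edge [ab] gives a closed walk without immediate
   backtracking through [ab]; shortening it yields a cycle. *)
Lemma girth_le_walk_avoiding g a b w : girth_ge G g -> adj a b ->
  path (adj_avoiding a b) b w -> last b w = a -> g <= (size w).+1.
Proof.
move=> girthG ab pw.
case: (shortenP pw) => w' pw' uw' sub lw'.
have nab := adj_neq ab.
have cyc : is_cycle b w'.
  rewrite /is_cycle uw' lw' ab (sub_path _ pw') ?andbT; last by move=> u v /andP[].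
  move: pw' lw' {uw' sub}; case: w' => [|c [|d w'']] //=.
  - by move=> _ E; rewrite E eqxx in nab.
  - by rewrite andbT => /andP[_ H] E; rewrite E !eqxx orbT in H.
apply: leq_trans (girthG _ _ cyc) _.
by rewrite /= ltnS uniq_leq_size //; case/andP: uw'.
Qed.

Lemma path_avoiding_endpoint a b z u s : (z == a) || (z == b) ->
  path adj u s -> all (fun v => v != z) (u :: s) -> path (adj_avoiding a b) u s.
Proof.
move=> zab; elim: s u => [|v s IH] u //= /andP[uv ps] /and3P[uz vz As].
apply/andP; split; last by apply: IH => //=; rewrite vz.
rewrite /adj_avoiding uv /=.
by case/orP: zab => /eqP E; subst z; rewrite (negbTE uz) (negbTE vz) ?andbF.
Qed.

Definition walk (W : {set T}) (a : T) (w : seq T) :=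
  path adj a w && all (fun x => x \in W) (a :: w).

Lemma walk_cat W a w1 w2 : walk W a w1 -> walk W (last a w1) w2 ->
  walk W a (w1 ++ w2).
Proof.
rewrite /walk cat_path => /andP[-> A1] /andP[-> A2] /=.
by move: A1 A2; rewrite /= all_cat => /andP[-> ->] /andP[_ ->].
Qed.

Lemma walk_rev W a w : walk W a w -> walk W (last a w) (rev (belast a w)).
Proof.
case/andP=> pw aw; rewrite /walk -rev_rcons -lastI all_rev aw andbT.
by rewrite rev_path (sub_path _ pw) // => u v; rewrite /= sadj_sym.
Qed.

Lemma walk_sub (W W' : {set T}) a w : W \subset W' -> walk W a w -> walk W' a w.
Proof.
by move=> /subsetP sW /andP[pw /allP aw]; rewrite /walk pw; apply/allP => v /aw /sW.
Qed.

Lemma walk_avoid (W : {set T}) z u s :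
  walk (W :\ z) u s -> all (fun v => v != z) (u :: s).
Proof. by case/andP=> _ /allP A; apply/allP=> v /A; rewrite !inE => /andP[]. Qed.

Lemma walk_join W a b z w1 w2 : walk W a w1 -> last a w1 = z ->
  walk W b w2 -> last b w2 = z ->
  exists w, [/\ walk W a w, last a w = b & size w = size w1 + size w2].
Proof.
move=> k1 l1 k2 l2; exists (w1 ++ rev (belast b w2)); split.
- by rewrite walk_cat // l1 -l2 walk_rev.
- by rewrite last_cat l1 -l2 last_rev_belast.
- by rewrite size_cat size_rev size_belast.
Qed.

Fixpoint ball (W : {set T}) (n : nat) (X : {set T}) : {set T} :=
  if n is n'.+1 then ball W n' X :|:
     [set v in W | [exists u in ball W n' X, adj u v]]
  else X :&: W.

Lemma ball_sub W n X : ball W n X \subset W.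
Proof.
elim: n => [|n IH] /=; first exact: subsetIr.
by rewrite subUset IH /=; apply/subsetP=> x; rewrite inE => /andP[].
Qed.

Lemma ball_mono W n m X : n <= m -> ball W n X \subset ball W m X.
Proof.
move=> /subnK <-; elim: (m - n) => [|k IH] //=.
exact: subset_trans IH (subsetUl _ _).
Qed.

Lemma ballP W n X z : (z \in ball W n X) <->
  (exists a w, [/\ a \in X, walk W a w, last a w = z & size w <= n]).
Proof.
elim: n z => [|n IH] z /=.
  split; first by rewrite inE => /andP[zX zW]; exists z, [::]; rewrite /walk /= zW.
  case=> a [[|c w] [aX wk lw sw]] //; move: wk; rewrite /walk /= andbT => aW.
  by rewrite inE -lw aX aW.
split.
  rewrite inE => /orP[/IH [a [w [aX wk lw sw]]]|].
    by exists a, w; split=> //; exact: leqW.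
  rewrite inE => /andP[zW /existsP[u /andP[/IH [a [w [aX /andP[pw aw] lw sw]]] uz]]].
  exists a, (rcons w z); rewrite last_rcons size_rcons; split=> //.
  by rewrite /walk rcons_path pw lw uz -rcons_cons all_rcons zW aw.
case=> a [w [aX wk lw sw]].
case: (lastP w) wk lw sw => [|w' v] wk lw sw.
  by rewrite inE; apply/orP; left; apply/IH; exists a, [::]; split.
rewrite size_rcons ltnS in sw.
move: wk; rewrite /walk rcons_path -rcons_cons all_rcons.
move=> /andP[/andP[pw uv] /andP[vW aw]].
move: lw; rewrite last_rcons => vz; subst v.
rewrite !inE vW /=; apply/orP; right.
apply/existsP; exists (last a w'); rewrite uv andbT; apply/IH.
by exists a, w'; split=> //; rewrite /walk pw aw.
Qed.

End Walks.

Section LargeGirth.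
Variable G : sgraph.
Local Notation T := (svert G).
Local Notation adj := (@sadj G).
Variables (V : {set T}) (R : nat).
Hypothesis girthG : girth_ge G (8 * R + 3).

(* When [xy] is an edge: the part of the [n]-neighbourhood of [x] in [G[V]]
   reached without going back through [y]. *)
Definition fwd_ball (y x : T) n := ball (V :\ y) n [set x].

Lemma fwd_ball_disjoint x x1 x2 n : 2 * n + 2 < 8 * R + 3 -> x1 != x2 ->
  adj x x1 -> adj x x2 -> [disjoint fwd_ball x x1 n & fwd_ball x x2 n].
Proof.
move=> hn n12 a1 a2; apply/pred0P => z /=; apply/negbTE/andP.
case=> /ballP[_ [w1 [/set1P-> wk1 lw1 sw1]]] /ballP[_ [w2 [/set1P-> wk2 lw2 sw2]]].
have [w [wk lw sw]] := walk_join wk1 lw1 wk2 lw2.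
have := @girth_le_walk_avoiding G _ x x1 (rcons w x) girthG a1.
rewrite rcons_path last_rcons size_rcons lw sw.
rewrite (path_avoiding_endpoint (z := x)) ?eqxx ?(walk_avoid wk) //; last by case/andP: wk.
rewrite /adj_avoiding sadj_sym a2 [x2 == x1]eq_sym (negbTE n12) (negbTE (adj_neq a1)).
by rewrite !andbF => /(_ isT erefl); lia.
Qed.

Lemma fwd_ball_nested x y x1 n : n + 2 < 8 * R + 3 -> x \in V ->
  adj x y -> adj x x1 -> x1 != y -> fwd_ball x x1 n \subset fwd_ball y x n.+1.
Proof.
move=> hn xV axy ax1 x1y.
apply/subsetP => z /ballP[_ [w [/set1P-> wk lw sw]]].
have yw : y \notin x1 :: w.
  rewrite in_cons eq_sym (negbTE x1y) /=; move: wk sw.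
  case: (boolP (y \in w)) => // /splitPr[w1 w2] wk; rewrite size_cat /= => sw.
  have /andP[+ _] := wk; rewrite cat_path => /andP[pw1 /= /andP[ly _]].
  have pw : path (adj_avoiding x x1) x1 (rcons w1 y).
    apply: (path_avoiding_endpoint (z := x)); rewrite ?eqxx ?rcons_path ?pw1 //.
    apply/allP => v vin; apply: (allP (walk_avoid wk)).
    by move: vin; rewrite !(in_cons, mem_rcons, mem_cat) => /or3P[] ->; rewrite ?orbT.
  have := @girth_le_walk_avoiding G _ x x1 (rcons (rcons w1 y) x) girthG ax1.
  rewrite rcons_path pw !last_rcons !size_rcons /adj_avoiding sadj_sym axy.
  rewrite [y == x1]eq_sym (negbTE x1y) [y == x]eq_sym (negbTE (adj_neq axy)).
  by move=> /(_ isT erefl); lia.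
apply/ballP; exists x, (x1 :: w); split=> //; first by rewrite inE.
have /andP[pw aw] := wk.
have aw' : all (fun v => v \in V :\ y) (x1 :: w).
  apply/allP => v vin; have := allP aw v vin; rewrite !inE => /andP[_ ->].
  by rewrite andbT; apply: contraNneq yw => <-.
by rewrite /walk /= ax1 pw; rewrite /= in aw'; rewrite aw' !inE (adj_neq axy) xV.
Qed.

Definition packing (X : {set T}) := (X \subset V) &&
  [forall c1 in X, forall c2 in X, (c1 != c2) ==>
     [disjoint ball V R [set c1] & ball V R [set c2]]].

Lemma packing0 : packing set0.
Proof. by rewrite /packing sub0set; apply/forall_inP => c; rewrite inE. Qed.

Definition centers := s2val (maxset_exists packing0).

Lemma centers_max : maxset packing centers.
Proof. exact: (s2valP (maxset_exists packing0)). Qed.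

Lemma centers_sub : centers \subset V.
Proof. by have /maxsetp/andP[] := centers_max. Qed.

Lemma centers_disjoint c1 c2 : c1 \in centers -> c2 \in centers -> c1 != c2 ->
  [disjoint ball V R [set c1] & ball V R [set c2]].
Proof.
move=> h1 h2; have /maxsetp/andP[_ /forall_inP/(_ c1 h1)/forall_inP/(_ c2 h2)] := centers_max.
exact/implyP.
Qed.

(* By maximality the [R]-ball of any [x] meets that of some center. *)
Lemma centers_cover x : x \in V -> x \in ball V (2 * R) centers.
Proof.
move=> xV; case: (boolP (x \in centers)) => xD.
  by apply: (subsetP (ball_mono _ _ (leq0n _))); rewrite /= inE xD xV.
have : ~~ packing (x |: centers).
  apply/negP => vx; have := maxsetsup centers_max vx (subsetUr _ _).
  by move/setP/(_ x); rewrite !inE eqxx (negbTE xD).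
rewrite /packing subUset sub1set xV centers_sub /=.
move=> /forall_inPn [c1 h1 /forall_inPn [c2 h2]].
rewrite negb_imply => /andP[n12 /pred0Pn [z /andP[z1 z2]]].
have meet c : c \in centers -> z \in ball V R [set c] -> z \in ball V R [set x] ->
    x \in ball V (2 * R) centers.
  move=> cD /ballP[_ [w [/set1P-> wk lw sw]]] /ballP[_ [w' [/set1P-> wk' lw' sw']]].
  have [w0 [k0 l0 s0]] := walk_join wk lw wk' lw'.
  by apply/ballP; exists c, w0; split=> //; rewrite s0; lia.
move: h1 h2; rewrite !inE => /orP[/eqP e1|d1] /orP[/eqP e2|d2].
- by rewrite e1 e2 eqxx in n12.
- by subst c1; apply: (meet c2).
- by subst c2; apply: (meet c1).
- by case/negP: (negbT (disjointFr (centers_disjoint d1 d2 n12) z1)).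
Qed.

Definition level n := ball V n centers.

(* The search range [0 .. 2R] suffices by [centers_cover]. *)
Definition depth (x : T) := find (fun n => x \in level n) (iota 0 (2 * R).+1).

Lemma depth_spec x : x \in V -> depth x <= 2 * R /\ x \in level (depth x).
Proof.
move=> xV.
have hs : has (fun n => x \in level n) (iota 0 (2 * R).+1).
  apply/hasP; exists (2 * R); last exact: centers_cover.
  by rewrite mem_iota add0n ltnSn.
have := hs; rewrite has_find size_iota => hlt.
split; first by rewrite -ltnS.
by have := nth_find 0 hs; rewrite nth_iota.
Qed.

Lemma depth_min x m : x \in level m -> depth x <= m.
Proof.
move=> xm; have xV : x \in V by apply: (subsetP (ball_sub _ _ _) _ xm).
rewrite leqNgt; apply/negP => hm.
have [hd _] := depth_spec xV.
have := @before_find _ 0 (fun n => x \in level n) (iota 0 (2 * R).+1) m hm.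
by rewrite nth_iota ?xm //; lia.
Qed.

Lemma depth_eq0 x : x \in V -> (depth x == 0) = (x \in centers).
Proof.
move=> xV; apply/eqP/idP => [h|xD].
  by have [_] := depth_spec xV; rewrite h /level /= inE => /andP[].
by apply/eqP; rewrite -leqn0; apply: depth_min; rewrite /level /= inE xD xV.
Qed.

Definition parent (x : T) : T :=
  if depth x is m.+1 then odflt x [pick u | (u \in level m) && adj u x] else x.

Lemma parent_depth0 x : depth x = 0 -> parent x = x.
Proof. by rewrite /parent => ->. Qed.

Lemma parent_spec x : x \in V -> 0 < depth x ->
  [/\ parent x \in V, adj (parent x) x & depth (parent x) < depth x].
Proof.
move=> xV; rewrite /parent; have [_] := depth_spec xV.
case E: (depth x) => [|m] //= xm _.
have nxm : x \notin level m by apply/negP => /depth_min; rewrite E ltnn.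
move: xm; rewrite /level /= inE (negbTE nxm) /= inE.
move=> /andP[_ /existsP [u /andP[um ux]]].
case: pickP => [v /andP[vm vx]|/(_ u)]; last by rewrite um ux.
split => //; first exact: (subsetP (ball_sub _ _ _) _ vm).
by rewrite ltnS; apply: depth_min.
Qed.

Lemma iter_parent x n : x \in V ->
  iter n parent x \in V /\ depth (iter n parent x) <= depth x - n.
Proof.
move=> xV; elim: n => [|n [IV IH]] /=; first by rewrite subn0.
case: (posnP (depth (iter n parent x))) => h.
  by rewrite parent_depth0 // IV h.
have [h1 _ h3] := parent_spec IV h; split => //; lia.
Qed.

Lemma iter_parent_stable x n : x \in V -> depth x <= n ->
  iter n parent x = iter (depth x) parent x.
Proof.
move=> xV /subnK <-; rewrite iterD.
have [_] := iter_parent (depth x) xV; rewrite subnn leqn0 => /eqP h.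
by elim: (n - depth x) => [|k IH] //=; rewrite IH parent_depth0.
Qed.

Definition root x := iter (2 * R) parent x.

Lemma root_center x : x \in V -> root x \in centers.
Proof.
move=> xV; have [hd _] := depth_spec xV; rewrite /root iter_parent_stable //.
have [h1 h2] := iter_parent (depth x) xV; rewrite subnn leqn0 in h2.
by rewrite -depth_eq0.
Qed.

Lemma root_parent x : x \in V -> root (parent x) = root x.
Proof.
move=> xV; have [hd _] := depth_spec xV.
by rewrite /root -iterSr iter_parent_stable ?(iter_parent_stable xV hd) //; apply: leqW.
Qed.

Lemma root_center_id x : x \in centers -> root x = x.
Proof.
move=> xD; have xV := subsetP centers_sub x xD.
by move: (xD); rewrite -depth_eq0 // /root => /eqP d0; rewrite iter_parent_stable ?d0.
Qed.

Definition tree_edge (a b : T) := [&& a \in V, 0 < depth a & b == parent a].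

Lemma tree_edge_adj a b : tree_edge a b -> adj a b.
Proof.
by case/and3P => aV ha /eqP ->; have [_ h _] := parent_spec aV ha; rewrite sadj_sym.
Qed.

Lemma tree_walk x : x \in V -> exists w,
  [/\ path tree_edge x w, last x w = root x & size w <= depth x].
Proof.
move=> xV; have [k dk] := ubnP (depth x); elim: k x xV dk => // k IH x xV dk.
case: (posnP (depth x)) => h.
  by exists [::]; rewrite /= /root iter_parent_stable ?h.
have [h1 h2 h3] := parent_spec xV h.
have [|w [pw lw sw]] := IH (parent x) h1; first lia.
exists (parent x :: w); split.
- by rewrite /= pw /tree_edge xV h eqxx.
- by rewrite /= lw root_parent.
- by rewrite /=; lia.
Qed.

Definition cross_edge (a b : T) :=
  [&& a \in V, b \in V, adj a b, ~~ tree_edge a b & ~~ tree_edge b a].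

Lemma tree_path_avoiding a b u w : ~~ tree_edge a b -> ~~ tree_edge b a ->
  path tree_edge u w -> path (adj_avoiding a b) u w.
Proof.
move=> n1 n2; apply: sub_path => x y txy; rewrite /adj_avoiding (tree_edge_adj txy) /=.
by apply/negP => /orP[] /andP[/eqP e1 /eqP e2]; subst; rewrite txy in n1 n2.
Qed.

Lemma tree_path_rev_avoiding a b u w : ~~ tree_edge a b -> ~~ tree_edge b a ->
  path tree_edge u w -> path (adj_avoiding a b) (last u w) (rev (belast u w)).
Proof.
move=> n1 n2; rewrite rev_path; apply: sub_path => x y /= tyx.
rewrite /adj_avoiding sadj_sym (tree_edge_adj tyx) /=.
by apply/negP => /orP[] /andP[/eqP e1 /eqP e2]; subst; rewrite tyx in n1 n2.
Qed.

Lemma cross_edge_roots a b : cross_edge a b -> root a != root b.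
Proof.
case/and5P => aV bV ab n1 n2; apply/eqP => E.
have [wa [pa la sa]] := tree_walk aV; have [wb [pb lb sb]] := tree_walk bV.
have [da _] := depth_spec aV; have [db _] := depth_spec bV.
have := @girth_le_walk_avoiding G _ a b (wb ++ rev (belast a wa)) girthG ab.
rewrite cat_path (tree_path_avoiding n1 n2 pb) lb -E -la.
rewrite (tree_path_rev_avoiding n1 n2 pa) last_cat lb -E -la.
rewrite last_rev_belast size_cat size_rev size_belast => /(_ isT erefl).
by clear -sa sb da db; lia.
Qed.

(* Otherwise the two cross edges and four tree paths of length at most [2R]
   would close a cycle of length at most [8R + 2]. *)
Lemma cross_edge_inj x1 y1 x2 y2 : cross_edge x1 y1 -> cross_edge x2 y2 ->
  root x1 = root x2 -> root y1 = root y2 -> (x1, y1) = (x2, y2).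
Proof.
move=> h1 h2 ex ey; apply/eqP; apply/negP => /negP ne.
have r1 := cross_edge_roots h1.
case/and5P: h1 => x1V y1V a1 n1 n2; case/and5P: h2 => x2V y2V a2 _ _.
have [wx1 [px1 lx1 sx1]] := tree_walk x1V; have [wy1 [py1 ly1 sy1]] := tree_walk y1V.
have [wx2 [px2 lx2 sx2]] := tree_walk x2V; have [wy2 [py2 ly2 sy2]] := tree_walk y2V.
have [dx1 _] := depth_spec x1V; have [dy1 _] := depth_spec y1V.
have [dx2 _] := depth_spec x2V; have [dy2 _] := depth_spec y2V.
set w := wy1 ++ rev (belast y2 wy2) ++ x2 :: wx2 ++ rev (belast x1 wx1).
have := @girth_le_walk_avoiding G _ x1 y1 w girthG a1.
have e : adj_avoiding x1 y1 y2 x2.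
  rewrite /adj_avoiding sadj_sym a2 /=; apply/negP => /orP[] /andP[/eqP e1 /eqP e2].
    by subst; rewrite ex ey eqxx in r1.
  by subst; rewrite eqxx in ne.
rewrite /w !cat_path (tree_path_avoiding n1 n2 py1) ly1 ey -ly2.
rewrite (tree_path_rev_avoiding n1 n2 py2) last_rev_belast /= e cat_path.
rewrite (tree_path_avoiding n1 n2 px2) lx2 -ex -lx1 (tree_path_rev_avoiding n1 n2 px1).
rewrite !last_cat ly1 ey -ly2 last_rev_belast /= last_cat lx2 -ex -lx1 last_rev_belast.
rewrite !size_cat /= !size_cat !size_rev !size_belast => /(_ isT erefl).
by clear -sx1 sy1 sx2 sy2 dx1 dy1 dx2 dy2; lia.
Qed.

Definition center := {c : T | c \in centers}.

Definition bag (u : center) : {set T} := [set x in V | root x == val u].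

Definition contraction_adj : rel center := fun u v =>
  (u != v) && [exists x, exists y, [&& x \in bag u, y \in bag v & adj x y]].

Lemma contraction_adj_sym : symmetric contraction_adj.
Proof.
move=> u v; rewrite /contraction_adj eq_sym; congr (_ && _).
by apply/existsP/existsP => -[x /existsP [y /and3P[h1 h2 h3]]];
  exists y; apply/existsP; exists x; rewrite h1 h2 sadj_sym h3.
Qed.

Lemma contraction_adj_irr : irreflexive contraction_adj.
Proof. by move=> u; rewrite /contraction_adj eqxx. Qed.

Definition contraction := SGraph contraction_adj_sym contraction_adj_irr.

Lemma contraction_minor : shallow_minor (4 * R) G contraction.
Proof.
have half_4R : (4 * R).+1./2 = 2 * R.
  have -> : (4 * R).+1 = true + (2 * R).*2 by rewrite -mul2n /=; lia.
  by rewrite half_bit_double.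
exists bag, val, parent; split.
- move=> u v uv; apply/pred0P => z /=; apply/negbTE/andP.
  rewrite !inE => -[/andP[_ /eqP e1] /andP[_ /eqP e2]].
  by move: uv; rewrite -(inj_eq val_inj) -e1 -e2 eqxx.
- move=> u; rewrite inE (subsetP centers_sub _ (valP u)) root_center_id ?eqxx //.
  exact: valP.
- move=> u x; rewrite !inE => /andP[xV /eqP rx] nx.
  have hd : 0 < depth x.
    rewrite lt0n depth_eq0 //; apply/negP => xD.
    by move: nx; rewrite -rx root_center_id // eqxx.
  have [h1 h2 _] := parent_spec xV hd.
  by rewrite h1 root_parent // rx eqxx sadj_sym h2.
- by move=> u x; rewrite inE => /andP[_ /eqP rx]; exists (2 * R); rewrite ?half_4R.
- move=> u v /andP[_ /existsP [x /existsP [y /and3P[hx hy hxy]]]].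
  exists x, y, (2 * R), (2 * R); rewrite hx hy hxy; split=> //.
  + by move: hx; rewrite inE => /andP[_ /eqP].
  + by move: hy; rewrite inE => /andP[_ /eqP].
  + lia.
Qed.

Definition arcs := [set q : T * T | (q.1 \in V) && (q.2 \in [set y in V | adj q.1 y])].
Definition tree_arcs := [set q : T * T | tree_edge q.1 q.2 || tree_edge q.2 q.1].

(* Each non-center vertex of [V] has exactly one tree arc towards its parent. *)
Lemma card_tree_arcs_le : #|tree_arcs| <= 2 * (#|V| - #|centers|).
Proof.
have -> : tree_arcs = [set q | tree_edge q.1 q.2] :|: [set q | tree_edge q.2 q.1].
  by apply/setP => q; rewrite !inE.
have hVD : #|V :\: centers| = #|V| - #|centers|.
  by rewrite cardsD (setIidPr centers_sub).
have card_le (h k : T * T -> T) : {in [set q | tree_edge (h q) (k q)] &, injective h} ->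
    #|[set q | tree_edge (h q) (k q)]| <= #|V :\: centers|.
  move=> inj; rewrite -(card_in_imset inj); apply: subset_leq_card.
  apply/subsetP => y /imsetP [q]; rewrite inE => /and3P[aV ha _] ->.
  by rewrite inE aV andbT -depth_eq0 // -lt0n ha.
apply: leq_trans (leq_card_setU _ _) _.
rewrite mul2n -addnn -hVD leq_add ?card_le //.
- by move=> [a b] [a' b']; rewrite !inE /= => /and3P[_ _ /eqP ->] /and3P[_ _ /eqP ->] /= ->.
- by move=> [a b] [a' b']; rewrite !inE /= => /and3P[_ _ /eqP ->] /and3P[_ _ /eqP ->] /= ->.
Qed.

Lemma cross_arc_edge q : q \in arcs :\: tree_arcs -> cross_edge q.1 q.2.
Proof.
rewrite !inE => /andP[/norP[n1 n2] /andP[aV /andP[bV ab]]].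
by rewrite /cross_edge aV bV ab n1 n2.
Qed.

Lemma card_cross_arcs_le :
  #|arcs :\: tree_arcs| <= #|[set q : center * center | contraction_adj q.1 q.2]|.
Proof.
pose roots (q : T * T) := (root q.1, root q.2).
have inj : {in arcs :\: tree_arcs &, injective roots}.
  move=> q q' /cross_arc_edge h /cross_arc_edge h' [e1 e2].
  by case: q q' h h' e1 e2 => [? ?] [? ?] /= h h'; apply: cross_edge_inj.
rewrite -(card_in_imset inj); apply: leq_trans (leq_imset_card (fun q => (val q.1, val q.2)) _).
apply/subset_leq_card/subsetP => _ /imsetP[q /cross_arc_edge qc ->].
have /and5P[aV bV ab _ _] := qc.
apply/imsetP; exists (Sub (root q.1) (root_center aV), Sub (root q.2) (root_center bV)) => //.
rewrite inE /contraction_adj -(inj_eq val_inj) /= (cross_edge_roots qc) /=.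
apply/existsP; exists q.1; apply/existsP; exists q.2.
by rewrite !inE aV bV ab !eqxx.
Qed.

Lemma fwd_ball_sub_ball c a n : c \in V -> adj c a ->
  fwd_ball c a n \subset ball V n.+1 [set c].
Proof.
move=> cV ca; apply/subsetP => z /ballP [_ [w [/set1P-> wk lw sw]]].
apply/ballP; exists c, (a :: w); split => //; first by rewrite inE.
have /andP[pw aw] := walk_sub (subsetDl V [set c]) wk.
by rewrite /walk /= ca pw cV.
Qed.

Lemma strict_ear_edge x x1 : x \in V -> x1 \in V -> adj x x1 ->
  strict_ear V x (rcons [::] x1).
Proof.
by move=> xV x1V ax1; rewrite /strict_ear /= xV x1V ax1 !inE (adj_neq ax1).
Qed.

Lemma strict_ear_last y0 t x : strict_ear V y0 (rcons t x) ->
  [/\ x \in V, last y0 t \in V & adj (last y0 t) x].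
Proof.
case/and5P=> _ _ As ps _; rewrite -rcons_cons all_rcons in As.
case/andP: As => -> /allP As; split=> //; last by move: ps; rewrite rcons_path => /andP[].
by apply: As; apply: mem_last.
Qed.

Section ShortEars.
Variable p : nat.
Hypothesis p_gt0 : 0 < p.
Hypothesis p_le_R : p <= R.
Hypothesis deg_ge2 : {in V, forall x, 1 < deg_in V x}.
Hypothesis short_ears : forall x0 t, strict_ear V x0 t -> size t < p.

(* A repetition would close a cycle shorter than the girth, since the ear is
   shorter than [p <= R]. *)
Lemma ear_extension_fresh y0 t x x1 : strict_ear V y0 (rcons t x) -> adj x x1 ->
  x1 != last y0 t -> x1 \notin y0 :: rcons t x.
Proof.
move=> se ax1 x1y.
have st := short_ears se; rewrite size_rcons in st.
case/and5P: se => us _ _ ps _.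
apply/negP => xin.
have [s1 [s2 E]] : exists s1 s2, y0 :: rcons t x = s1 ++ x1 :: s2.
  by case/splitPr: xin => s1 s2; exists s1, s2.
have px : path adj x1 s2 by have := ps; rewrite -/(sorted _ (_ :: _)) E => /cat_sorted2[].
have ls : last x1 s2 = x.
  by have := congr1 (last y0) E; rewrite /= last_rcons last_cat /= => ->.
have sz : size s2 <= (size t).+1.
  by have := congr1 size E; rewrite /= size_rcons size_cat /=; lia.
move: us; rewrite E cat_uniq => /and3P[_ _ /andP[u2 ux]].
clear xin; case: s2 px ls u2 ux E sz => [|c s2'] px ls u2 ux E sz.
  by move: (adj_neq ax1); rewrite /= -ls eqxx.
case: (eqVneq c x) => cx.
  subst c; case: s2' px ls u2 ux E sz => [|d s''] px ls u2 ux E sz; last first.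
    by move: ux; rewrite /= -ls (mem_last d s'').
  have : rcons (y0 :: t) x = rcons (rcons s1 x1) x by rewrite rcons_cons E -!cats1 -catA.
  move/rcons_inj => [] E2.
  by move: x1y; rewrite -[last y0 t]/(last y0 (y0 :: t)) E2 last_rcons eqxx.
suff : 8 * R + 3 <= (size (c :: s2')).+1 by move: sz => /= sz; lia.
apply: (@girth_le_walk_avoiding G _ x x1 (c :: s2') girthG ax1) => //=.
case/andP: px => ax1c pc; apply/andP; split.
  by rewrite /adj_avoiding ax1c eq_sym (negbTE (adj_neq ax1)) (negbTE cx) andbF.
apply: (path_avoiding_endpoint (z := x1)); rewrite ?eqxx ?orbT //.
by apply/allP => v vin; apply/eqP => Ev; move: u2; rewrite -Ev vin.
Qed.

Definition branch := [set x in V | 2 < deg_in V x].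

(* Count of branch vertices seen from the end [x] of an ear [y0 :: t ++ [x]]
   by the forward ball of radius [n]: every branch vertex doubles it and the
   next one is less than [p] steps away, [size t] of them being already used. *)
Definition branch_growth n := forall y0 t x, strict_ear V y0 (rcons t x) ->
  2 ^ ((n + size t) %/ p) <= #|branch :&: fwd_ball (last y0 t) x n| + 1.

Lemma branch_growth0 : branch_growth 0.
Proof.
move=> y0 t x /short_ears; rewrite size_rcons => st.
by rewrite add0n divn_small ?expn0 ?leq_addl //; clear -st; lia.
Qed.

Lemma branch_growthS_branch n y0 t x : n < R -> branch_growth n ->
  strict_ear V y0 (rcons t x) -> 2 < deg_in V x ->
  2 ^ ((n.+1 + size t) %/ p) <= #|branch :&: fwd_ball (last y0 t) x n.+1| + 1.
Proof.
move=> hn IH se dx; have st := short_ears se; rewrite size_rcons in st.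
have [xV yV ayx] := strict_ear_last se; set y := last y0 t in yV ayx *.
have axy : adj x y by rewrite sadj_sym.
have yN : y \in [set z in V | adj x z] by rewrite inE yV axy.
have : 1 < #|[set z in V | adj x z] :\ y| by move: dx; rewrite /deg_in (cardsD1 y) yN.
case/card_gt1P => x1 [x2 [+ + n12]]; rewrite !inE => /and3P[x1y x1V ax1] /and3P[x2y x2V ax2].
have I1 := IH x [::] x1 (strict_ear_edge xV x1V ax1).
have I2 := IH x [::] x2 (strict_ear_edge xV x2V ax2).
rewrite /= addn0 in I1 I2.
set A1 := branch :&: fwd_ball x x1 n in I1; set A2 := branch :&: fwd_ball x x2 n in I2.
have sub : x |: (A1 :|: A2) \subset branch :&: fwd_ball y x n.+1.
  have Fx : x \in fwd_ball y x n.+1.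
    apply: (subsetP (ball_mono _ _ (leq0n n.+1))).
    by rewrite /= !inE eqxx xV eq_sym (adj_neq ayx).
  rewrite subUset sub1set inE Fx inE xV dx /=.
  by rewrite subUset !setIS ?fwd_ball_nested //; clear -hn; lia.
have xA : x \notin A1 :|: A2.
  by rewrite !inE negb_or; apply/andP; split; apply/negP => /andP[_]
    /(subsetP (ball_sub _ _ _)); rewrite !inE eqxx.
have /eqP dis : A1 :&: A2 == set0.
  rewrite setI_eq0.
  apply: disjointWl (subsetIr _ _) _; apply: disjointWr (subsetIr _ _) _.
  by apply: fwd_ball_disjoint => //; clear -hn; lia.
have := subset_leq_card sub; rewrite cardsU1 xA cardsU dis cards0 subn0 /= => C.
have E1 : 2 ^ ((n.+1 + size t) %/ p) <= 2 * 2 ^ (n %/ p).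
  rewrite -expnS leq_exp2l // -[X in _ <= X]add1n -(divnMDl 1 n p_gt0) mul1n.
  by apply: leq_div2r; clear -st; lia.
by clear -C I1 I2 E1; lia.
Qed.

Lemma branch_growthS_ear n y0 t x : n < R -> branch_growth n ->
  strict_ear V y0 (rcons t x) -> deg_in V x = 2 ->
  2 ^ ((n.+1 + size t) %/ p) <= #|branch :&: fwd_ball (last y0 t) x n.+1| + 1.
Proof.
move=> hn IH se d2; have [xV yV ayx] := strict_ear_last se.
set y := last y0 t in yV ayx *.
have yN : y \in [set z in V | adj x z] by rewrite inE yV sadj_sym ayx.
have : 0 < #|[set z in V | adj x z] :\ y|.
  by move: d2; rewrite /deg_in (cardsD1 y) yN => d2; clear -d2; lia.
case/card_gt0P => x1; rewrite !inE => /and3P[x1y x1V ax1].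
have se' : strict_ear V y0 (rcons (rcons t x) x1).
  case/and5P: (se) => us _ As ps Ai; apply/and5P; split.
  - by rewrite -rcons_cons rcons_uniq ear_extension_fresh.
  - by rewrite -size_eq0 size_rcons.
  - by rewrite -rcons_cons all_rcons x1V As.
  - by rewrite rcons_path ps last_rcons ax1.
  - by rewrite interior_rcons all_rcons d2 /=; rewrite interior_rcons in Ai.
have := IH y0 (rcons t x) x1 se'; rewrite last_rcons size_rcons addnS -addSn.
move/leq_trans; apply; rewrite leq_add2r; apply/subset_leq_card/setIS.
apply: fwd_ball_nested; rewrite // 1?sadj_sym //; clear -hn; lia.
Qed.

Lemma branch_growth_le n : n <= R -> branch_growth n.
Proof.
elim: n => [_|n IH hn y0 t x se]; first exact: branch_growth0.
have [xV _ _] := strict_ear_last se; have := deg_ge2 xV.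
case: (ltngtP (deg_in V x) 2) => // [dx|d2] _.
  exact: branch_growthS_branch (IH (ltnW hn)) se dx.
exact: branch_growthS_ear (IH (ltnW hn)) se d2.
Qed.

Lemma card_arcs_ge : 2 * #|V| + #|branch| <= #|arcs|.
Proof.
rewrite /arcs (card_dep_pairs V (fun x => [set y in V | adj x y])).
have -> : 2 * #|V| + #|branch| = \sum_(x in V) (2 + (x \in branch)).
  rewrite big_split /= sum_nat_const mulnC; congr (_ + _).
  rewrite -big_mkcondr /= -sum1_card; apply: eq_bigl => x.
  by rewrite /branch inE; case: (x \in V).
apply: leq_sum => x xV; have := deg_ge2 xV; rewrite /branch inE xV /=.
rewrite /deg_in; set k := #|_| => k_gt1.
by case: (ltnP 2 k) => /= k2; clear -k_gt1 k2; lia.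
Qed.

(* Degree 2 everywhere already accounts for the tree arcs; every branch vertex
   and every center contributes at least one more arc. *)
Lemma card_cross_arcs_ge : #|branch| + 2 * #|centers| <= #|arcs :\: tree_arcs|.
Proof.
have hP := card_arcs_ge; have hT := card_tree_arcs_le.
have hD : #|centers| <= #|V| by apply: subset_leq_card centers_sub.
have hI : #|arcs :&: tree_arcs| <= #|tree_arcs| by apply/subset_leq_card/subsetIr.
by rewrite cardsD; clear -hP hT hD hI; lia.
Qed.

(* Each center sees [2 ^ ((R - 1) %/ p) - 1] branch vertices in its [R]-ball,
   and these balls are disjoint. *)
Lemma branch_ball_count : #|centers| * 2 ^ ((R - 1) %/ p) <= #|branch| + #|centers|.
Proof.
pose Q := [set q : T * T | (q.1 \in centers) && (q.2 \in branch :&: ball V R [set q.1])].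
have hQ : #|Q| <= #|branch|.
  have inj : {in Q &, injective snd}.
    move=> [c z] [c' z']; rewrite !inE /= => /andP[cD /andP[_ z1]] /andP[cD' /andP[_ z2]] ez.
    subst z'; case: (eqVneq c c') => [->//|ne].
    by case/negP: (negbT (disjointFr (centers_disjoint cD cD' ne) z1)).
  rewrite -(card_in_imset inj); apply: subset_leq_card.
  by apply/subsetP => y /imsetP [q]; rewrite !inE => /andP[_ /andP[h _]] ->.
suff : #|centers| * 2 ^ ((R - 1) %/ p) <= #|Q| + #|centers| by clear -hQ; lia.
rewrite (card_dep_pairs centers (fun c => branch :&: ball V R [set c])).
rewrite -sum_nat_const -[#|centers|]sum1_card -big_split /=.
apply: leq_sum => c cD; have cV := subsetP centers_sub c cD.
have : 0 < deg_in V c by have := deg_ge2 cV; clear; lia.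
case/card_gt0P => a; rewrite inE => /andP[aV ca].
have := branch_growth_le (leq_subr 1 R) (strict_ear_edge cV aV ca); rewrite /= addn0.
move/leq_trans; apply; rewrite leq_add2r; apply/subset_leq_card/setIS.
have R_gt0 : 0 < R by clear -p_gt0 p_le_R; lia.
by have := fwd_ball_sub_ball (R - 1) cV ca; rewrite subn1 prednK.
Qed.

Lemma contraction_dense : V != set0 ->
  [/\ shallow_minor (4 * R) G contraction, 0 < nverts contraction &
      nverts contraction * 2 ^ ((R - 1) %/ p) <= 2 * nedges contraction].
Proof.
case/set0Pn => x0 x0V.
have -> : nverts contraction = #|centers| by rewrite /nverts card_sig; apply: eq_card.
split; first exact: contraction_minor.
  by apply/card_gt0P; exists (root x0); apply: root_center.
apply: leq_trans (card_arcs_le contraction); apply: leq_trans card_cross_arcs_le.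
apply: leq_trans branch_ball_count _; apply: leq_trans card_cross_arcs_ge.
by rewrite leq_add2l leq_pmull.
Qed.
End ShortEars.

End LargeGirth.

Definition p_core (p : nat) (G : sgraph) (V : {set svert G}) :=
  [/\ V != set0, {in V, forall x, 1 < deg_in V x}
    & forall x0 t, strict_ear V x0 t -> size t < p].

Lemma card_ear_reduction (G : sgraph) (V : {set svert G}) x0 t :
  strict_ear V x0 t -> 1 < size t -> #|V :\: [set x | x \in interior x0 t]| < #|V|.
Proof.
case/and5P => _ _ At _ _; case: t At => [|a [|b t]] // /and3P[_ aV _] _.
rewrite (cardsD1 a V) aV add1n ltnS; apply/subset_leq_card/subsetP => y.
by rewrite !inE => /andP[yI ->]; rewrite andbT; apply: contraNneq yI => ->; rewrite eqxx.
Qed.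

Lemma exists_p_reduction p (G : sgraph) (V : {set svert G}) : 1 < p ->
  V != set0 -> ~ p_core p V -> exists2 W, p_reduction p V W & #|W| < #|V|.
Proof.
move=> p_gt1 V0 ncore.
case: (boolP [exists x in V, deg_in V x <= 1]) => [/exists_inP[x xV]|/exists_inPn deg].
  have ltV : #|V :\ x| < #|V| by rewrite (cardsD1 x V) xV.
  rewrite leq_eqVlt ltnS leqn0 => /orP[/eqP d1|/eqP d0]; exists (V :\ x) => //.
    exact: red_leaf.
  exact: red_isolated.
case: (classic (exists x1 t, strict_ear V x1 t /\ p <= size t)).
  case=> x1 [t [se pt]]; exists (V :\: [set x | x \in interior x1 t]).
    exact: red_ear.
  by apply: card_ear_reduction se _; apply: leq_trans pt.
move=> noear; case: ncore; split=> // [x /deg|x1 t se]; first by rewrite -ltnNge.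
by rewrite ltnNge; apply/negP => pt; apply: noear; exists x1, t.
Qed.

Lemma p_reducible_of_no_core p (G : sgraph) : 1 < p ->
  (forall V : {set svert G}, ~ p_core p V) ->
  forall V : {set svert G}, p_reducible p V.
Proof.
move=> p_gt1 nocore V; have [n] := ubnP #|V|; elim: n V => // n IH V ltV.
case: (eqVneq V set0) => [->|V0]; first exact: pred_empty.
have [W red ltW] := exists_p_reduction p_gt1 V0 (nocore V).
by apply: pred_step red (IH _ _); apply: leq_trans ltW _.
Qed.

Lemma density_incompatible p m d e : 1 < p -> 2 < m -> 0 < d ->
  d * 2 ^ m <= 2 * e ->
  e ^ (2 * (4 * p)) <= 2 ^ (4 * (p * m + 1)) * d ^ (2 * (4 * p)) -> False.
Proof.
move=> p_gt1 m_gt2 d_gt0 dense sparse; set k := 2 * (4 * p) in sparse.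
have : (d * 2 ^ m) ^ k <= (2 * e) ^ k by rewrite leq_exp2r // /k; lia.
rewrite !expnMn -!expnM => /leq_trans/(_ (leq_mul (leqnn (2 ^ k)) sparse)).
rewrite mulnA -expnD mulnC leq_mul2r expn_eq0 (negbTE (lt0n_neq0 d_gt0)) /=.
by rewrite leq_exp2l // /k; nia.
Qed.

Theorem mainTheorem1 (C : graph_class) :
  subexp_expansion C ->
  forall p : nat, 2 <= p ->
  exists g : nat, forall G : sgraph, C G -> girth_ge G g -> p_path_degenerate p G.
Proof.
move=> [_ subexp] p p_gt1.
have [K expK] : exists K, _ := subexp (4 * p) ltac:(lia).
pose m := maxn 3 K; pose R := p * m + 1.
have m_gt2 : 2 < m := leq_maxl 3 K.
have K_le_m : K <= m := leq_maxr 3 K.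
have p_le_R : p <= R by rewrite /R; nia.
have K_le_4R : K <= 4 * R by rewrite /R; nia.
exists (8 * R + 3) => G CG girthG.
apply: p_reducible_of_no_core => // V [V0 deg ears].
have [minorH H_gt0] := contraction_dense girthG (ltnW p_gt1) p_le_R deg ears V0.
rewrite /R addnK mulKn ?(ltnW p_gt1) // => denseH.
exact: density_incompatible p_gt1 m_gt2 H_gt0 denseH (expK _ K_le_4R G _ CG minorH H_gt0).
Qed.
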